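(* Fix a positive integer $k$ and a permutation $\rho$. Then $\lim_{n\to\infty}\left(\operatorname{op}_{n,k}(\rho)\right)^{1/n}$ exists and is a real number in $[1,\infty)$.
   Context: An ordered set partition of $[n]$ into $k$ blocks is a sequence $B_1/B_2/\cdots/B_k$ of nonempty, pairwise disjoint subsets of $[n]$ whose union is $[n]$; the order of the blocks matters, but not the order of elements within a block. For a permutation $\rho=\rho_1\cdots\rho_m\in\mathcal{S}_m$, an ordered partition $B_1/\cdots/B_k$ contains $\rho$ if there are block indices $i_1<i_2<\cdots<i_m$ and elements $b_j\in B_{i_j}$ such that $b_1\cdots b_m$ is order-isomorphic to $\rho$ (i.e. $b_a<b_c$ iff $\rho_a<\rho_c$); otherwise it avoids $\rho$. $\operatorname{op}_{n,k}(\rho)$ denotes the number of $\rho$-avoiding ordered partitions of $[n]$ into $k$ blocks. *)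

From HB Require Import structures.
From mathcomp Require Import all_boot all_order all_algebra all_fingroup.

Set Implicit Arguments. Unset Strict Implicit. Unset Printing Implicit Defensive.

(* [n] is modelled by 'I_n = {0,...,n-1} (order-isomorphic to {1,...,n}).
   An ordered set partition into k blocks is B_0/.../B_{k-1}, B : 'I_k -> {set 'I_n}. *)
Definition is_ord_part (n k : nat) (B : {ffun 'I_k -> {set 'I_n}}) : bool :=
  [&& [forall i, B i != set0],
      [forall i, forall j, (i != j) ==> [disjoint B i & B j]]
    & \bigcup_i B i == finset.setT].

Definition op_contains (n k m : nat) (B : {ffun 'I_k -> {set 'I_n}}) (rho : 'S_m)
  : bool :=
  [exists f : {ffun 'I_m -> 'I_k}, exists b : {ffun 'I_m -> 'I_n},
     [forall a : 'I_m, (b a \in B (f a)) &&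
       [forall c : 'I_m, ((a < c)%N ==> (f a < f c)%N) &&
                         ((b a < b c)%N == (rho a < rho c)%N)]]].

Definition op_count (n k m : nat) (rho : 'S_m) : nat :=
  #|[set B : {ffun 'I_k -> {set 'I_n}} | is_ord_part B && ~~ op_contains B rho]|.

(* Reading an ordered partition as the word sending each element to the index
   of its block, op_{n,k}(rho) lies between the numbers of surjective and of
   all rho-avoiding words over k letters, and both grow like L^n with
   L = min(k, m-1).

   Lower bound: spell 0, ..., k-1 on the first (or, depending on whether
   rho(1) = 1, the last) k positions and fill the rest freely with the top L
   letters; an occurrence of rho needs m increasing letters, hence a low one,
   which is then the leftmost (rightmost) value of the occurrence.

   Upper bound: for every word u of length m over k letters, let d_u(p) be the
   longest prefix of u embedded in the first p letters of w, and Phi(p) the sum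
   of the d_u(p).  Phi is nondecreasing and bounded by k^m m, and for avoiding
   w it increases across any segment carrying m increasing letters h (take
   u = h o rho^-1: a full embedding of u would be an occurrence of rho).  So
   the positions split into O(k^m m) consecutive levels on each of which
   Phi is constant, and each level uses at most m - 1 distinct letters.
   Encoding the level boundaries and the letter sets costs a factor polynomial
   in n, the letters themselves at most L^n. *)

From HB Require Import structures.
From mathcomp Require Import all_boot all_order all_algebra all_fingroup zify.
Set Implicit Arguments. Unset Strict Implicit. Unset Printing Implicit Defensive.

Section WordsAndPartitions.
Variables (n k m : nat) (rho : 'S_m).

Definition word_contains (w : {ffun 'I_n -> 'I_k}) : bool :=
  [exists b : {ffun 'I_m -> 'I_n}, [forall a : 'I_m, forall c : 'I_m,
     ((a < c) ==> (w (b a) < w (b c))) && ((b a < b c) == (rho a < rho c))]].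

Definition blocks_of_word (w : {ffun 'I_n -> 'I_k}) : {ffun 'I_k -> {set 'I_n}} :=
  [ffun i => [set x | w x == i]].

Lemma blocks_of_word_inj : injective blocks_of_word.
Proof.
move=> w1 w2 E; apply/ffunP=> x.
have : x \in blocks_of_word w1 (w1 x) by rewrite ffunE inE.
by rewrite E ffunE inE => /eqP.
Qed.

Lemma is_ord_part_blocks_of_word (w : {ffun 'I_n -> 'I_k}) :
  (forall i, exists x, w x = i) -> is_ord_part (blocks_of_word w).
Proof.
move=> w_surj; apply/and3P; split.
- apply/forallP => i; apply/set0Pn; have [x wx] := w_surj i.
  by exists x; rewrite ffunE inE wx.
- apply/forallP => i; apply/forallP => j; apply/implyP => ij.
  rewrite disjoints_subset; apply/subsetP => x; rewrite !ffunE !inE => /eqP ->.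
  exact: ij.
- apply/eqP/setP => x; rewrite inE; apply/bigcupP; exists (w x) => //.
  by rewrite ffunE inE.
Qed.

Lemma word_contains_blocks_of_word (w : {ffun 'I_n -> 'I_k}) :
  op_contains (blocks_of_word w) rho -> word_contains w.
Proof.
case/existsP=> f /existsP[b /forallP H].
have wb a : w (b a) = f a by have /andP[] := H a; rewrite ffunE inE => /eqP.
apply/existsP; exists b; apply/forallP=> a; apply/forallP=> c.
by have /andP[_ /forallP/(_ c)/andP[H1 H2]] := H a; rewrite !wb H1 H2.
Qed.

Section WordOfBlocks.
Variable i0 : 'I_k.

(* [i0] is a junk value, never used when [B] is an ordered partition. *)
Definition word_of_blocks (B : {ffun 'I_k -> {set 'I_n}}) : {ffun 'I_n -> 'I_k} :=
  [ffun x => odflt i0 [pick i | x \in B i]].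

Variable B : {ffun 'I_k -> {set 'I_n}}.
Hypothesis B_part : is_ord_part B.

Lemma mem_word_of_blocks x : x \in B (word_of_blocks B x).
Proof.
case/and3P: B_part => _ _ /eqP cov.
have : x \in \bigcup_i B i by rewrite cov inE.
case/bigcupP=> i _ xi.
by rewrite ffunE; case: pickP => [j //|/(_ i)]; rewrite xi.
Qed.

Lemma word_of_blocksE x i : (x \in B i) = (word_of_blocks B x == i).
Proof.
have xin := mem_word_of_blocks x.
case/and3P: B_part => _ /forallP dis _.
apply/idP/eqP => [xi|<-//].
apply/eqP; apply/negPn/negP => ne.
move: (dis (word_of_blocks B x)) => /forallP/(_ i); rewrite ne /=.
by move=> /disjointFr/(_ xin); rewrite xi.
Qed.

Lemma word_of_blocksK : blocks_of_word (word_of_blocks B) = B.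
Proof.
by apply/ffunP=> i; apply/setP=> x; rewrite ffunE inE word_of_blocksE.
Qed.

Lemma op_contains_word_of_blocks :
  word_contains (word_of_blocks B) -> op_contains B rho.
Proof.
case/existsP=> b /forallP H; apply/existsP.
exists [ffun a => word_of_blocks B (b a)]; apply/existsP; exists b.
apply/forallP=> a; rewrite ffunE mem_word_of_blocks /=.
by apply/forallP=> c; have := forallP (H a) c; rewrite !ffunE.
Qed.

End WordOfBlocks.

Lemma op_count_le_avoiding_words : 0 < k ->
  op_count n k rho <= #|[set w : {ffun 'I_n -> 'I_k} | ~~ word_contains w]|.
Proof.
move=> k_gt0; pose i0 := Ordinal k_gt0.
rewrite /op_count -(@card_in_imset _ _ (word_of_blocks i0)); last first.
  move=> B1 B2; rewrite !inE => /andP[P1 _] /andP[P2 _] E.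
  by rewrite -(word_of_blocksK i0 P1) -(word_of_blocksK i0 P2) E.
apply/subset_leq_card/subsetP=> _ /imsetP[B + ->]; rewrite !inE => /andP[PB].
exact/contra/op_contains_word_of_blocks.
Qed.

Lemma card_le_op_count (A : {set {ffun 'I_n -> 'I_k}}) :
  (forall w, w \in A -> (forall i, exists x, w x = i) /\ ~~ word_contains w) ->
  #|A| <= op_count n k rho.
Proof.
move=> HA; rewrite -(card_imset _ blocks_of_word_inj).
apply/subset_leq_card/subsetP => _ /imsetP[w /HA[w_surj avoid] ->].
rewrite inE is_ord_part_blocks_of_word //=.
exact: contra (@word_contains_blocks_of_word w) avoid.
Qed.

End WordsAndPartitions.

Section Potential.
Variables (n k m : nat) (w : {ffun 'I_n -> 'I_k}).

Definition prefix_embedding (u : {ffun 'I_m -> 'I_k}) (p j : nat)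
    (t : {ffun 'I_m -> 'I_n}) : bool :=
  [forall a : 'I_m, (a < j) ==> [&& t a < p, w (t a) == u a &
     [forall c : 'I_m, ((a < c) && (c < j)) ==> (t a < t c)]]].

Definition embed_depth (u : {ffun 'I_m -> 'I_k}) (p : nat) : nat :=
  \max_(j < m.+1 | (val j == 0) || [exists t, prefix_embedding u p j t]) j.

Definition potential (p : nat) : nat :=
  \sum_(u : {ffun 'I_m -> 'I_k}) embed_depth u p.

Lemma prefix_embedding_mono u p q j t :
  p <= q -> prefix_embedding u p j t -> prefix_embedding u q j t.
Proof.
move=> pq /forallP H; apply/forallP=> a; apply/implyP=> aj.
have /and3P[H1 H2 H3] := implyP (H a) aj.
by rewrite H2 H3 (leq_trans H1 pq).
Qed.

Lemma embed_depth_mono u p q : p <= q -> embed_depth u p <= embed_depth u q.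
Proof.
move=> pq; apply/bigmax_leqP => j /orP Pj; apply: leq_bigmax_cond.
case: Pj => [->//|/existsP[t Ht]]; apply/orP; right; apply/existsP; exists t.
exact: prefix_embedding_mono Ht.
Qed.

Lemma potential_mono p q : p <= q -> potential p <= potential q.
Proof. by move=> pq; apply: leq_sum => u _; apply: embed_depth_mono. Qed.

Lemma embed_depth_le u p : embed_depth u p <= m.
Proof. by apply/bigmax_leqP => j _; rewrite -ltnS. Qed.

Lemma potential_le p : potential p <= k ^ m * m.
Proof.
apply: leq_trans (_ : \sum_(u : {ffun 'I_m -> 'I_k}) m <= _).
  by apply: leq_sum => u _; apply: embed_depth_le.
by rewrite sum_nat_const card_ffun !card_ord.
Qed.

Lemma embed_depthP u p (x0 : 'I_n) :
  exists t, prefix_embedding u p (embed_depth u p) t.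
Proof.
have [i0 Pi0 E] := @eq_bigmax_cond _
  [pred j : 'I_m.+1 | (val j == 0) || [exists t, prefix_embedding u p j t]]
  (fun j => val j) (ltac:(by apply/card_gt0P; exists ord0; rewrite inE)).
have -> : embed_depth u p = val i0 by exact: E.
move: Pi0; rewrite inE => /orP[/eqP->|/existsP[t Ht]]; last by exists t.
by exists [ffun=> x0]; apply/forallP.
Qed.

Lemma prefix_embedding_extend u p q t (J : 'I_m) (y : 'I_n) :
  prefix_embedding u p J t -> p <= y < q -> w y = u J ->
  prefix_embedding u q J.+1 [ffun a => if a == J then y else t a].
Proof.
move=> Ht /andP[py yq] wy; apply/forallP=> a; apply/implyP=> aJ; rewrite !ffunE.
case: eqP => [->|/eqP aJ'].
  rewrite yq wy eqxx /=; apply/forallP=> c; apply/implyP=> /andP[Jc cJ].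
  by move: Jc; rewrite ltnNge -ltnS cJ.
have aJ1 : a < J by rewrite ltn_neqAle -ltnS aJ andbT.
have /and3P[ta_lt -> /forallP t_inc] := implyP (forallP Ht a) aJ1.
rewrite (leq_trans ta_lt (leq_trans py (ltnW yq))) /=.
apply/forallP=> c; apply/implyP=> /andP[ac cJ]; rewrite ffunE.
case: eqP => [_|/eqP cJ']; first exact: leq_trans ta_lt py.
have cJ1 : c < J by rewrite ltn_neqAle -ltnS cJ andbT.
by apply: (implyP (t_inc c)); rewrite ac cJ1.
Qed.

Variable rho : 'S_m.

Lemma word_contains_of_full_embedding (h : 'I_m -> 'I_k) p t :
  (forall a c : 'I_m, a < c -> h a < h c) ->
  prefix_embedding [ffun j => h ((rho^-1)%g j)] p m t -> word_contains rho w.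
Proof.
move=> h_inc /forallP H.
have t_inc (x y : 'I_m) : x < y -> t x < t y.
  move=> xy; have /and3P[_ _ /forallP/(_ y)] := implyP (H x) (ltn_ord x).
  by rewrite xy ltn_ord => /implyP; apply.
have t_mono (x y : 'I_m) : (t x < t y) = (x < y).
  case: (ltngtP x y) => [xy|yx|/val_inj->]; [exact: t_inc | | exact: ltnn].
  by apply/negbTE; rewrite -leqNgt ltnW // t_inc.
have wt (x : 'I_m) : w (t x) = h ((rho^-1)%g x).
  by have /and3P[_ /eqP -> _] := implyP (H x) (ltn_ord x); rewrite ffunE.
apply/existsP; exists [ffun a => t (rho a)]; apply/forallP=> a; apply/forallP=> c.
by rewrite !ffunE !wt !permK t_mono eqxx andbT; apply/implyP; apply: h_inc.
Qed.

(* The longest embedded prefix of [u] below [p] is proper, and the run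
   supplies its next letter at a position in [p, q). *)
Lemma embed_depth_lt (h : 'I_m -> 'I_k) (x : 'I_m -> 'I_n) p q : 0 < m ->
  ~~ word_contains rho w -> (forall a c : 'I_m, a < c -> h a < h c) ->
  (forall a, w (x a) = h a) -> (forall a, p <= x a < q) ->
  embed_depth [ffun j => h ((rho^-1)%g j)] p <
    embed_depth [ffun j => h ((rho^-1)%g j)] q.
Proof.
move=> m_gt0 avoid h_inc wx x_in; set u := [ffun j => h _].
have [t Ht] := embed_depthP u p (x (Ordinal m_gt0)).
have depth_lt : embed_depth u p < m.
  rewrite ltn_neqAle embed_depth_le andbT; apply/eqP => full.
  rewrite full in Ht.
  by move: avoid; rewrite (word_contains_of_full_embedding h_inc Ht).
pose J : 'I_m := Ordinal depth_lt.
have wy : w (x ((rho^-1)%g J)) = u J by rewrite wx ffunE.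
(* Restated at [J] so that unification does not unfold [embed_depth]. *)
have HtJ : prefix_embedding u p J t by [].
have Ht' := prefix_embedding_extend HtJ (x_in ((rho^-1)%g J)) wy.
apply: leq_trans (_ : val (Ordinal (depth_lt : J.+1 < m.+1)) <= _) => //.
apply: (@leq_bigmax_cond _ _ (fun i : 'I_m.+1 => val i)).
by apply/orP; right; apply/existsP; eexists; exact: Ht'.
Qed.

Lemma potential_lt (h : 'I_m -> 'I_k) (x : 'I_m -> 'I_n) p q : 0 < m ->
  ~~ word_contains rho w -> (forall a c : 'I_m, a < c -> h a < h c) ->
  (forall a, w (x a) = h a) -> (forall a, p <= x a < q) ->
  potential p < potential q.
Proof.
move=> m_gt0 avoid h_inc wx x_in.
have pq : p <= q.
  by have /andP[px xq] := x_in (Ordinal m_gt0); exact: ltnW (leq_ltn_trans px xq).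
rewrite /potential (bigD1 [ffun j => h ((rho^-1)%g j)]) //=.
rewrite [X in _ < X](bigD1 [ffun j => h ((rho^-1)%g j)]) //= -addSn.
rewrite leq_add ?(embed_depth_lt m_gt0 avoid h_inc wx x_in) //.
by apply: leq_sum => v _; apply: embed_depth_mono.
Qed.

End Potential.

Definition nlevels (k m : nat) : nat := (2 * (k ^ m * m)).+2.

Section Levels.
Variables (n k m : nat) (w : {ffun 'I_n -> 'I_k}).
Local Notation Phi := (potential m w).
Let Phi_mono := @potential_mono n k m w.

(* The parity bit makes the potential stall between any two distinct
   positions of the same level (see [level_stall]). *)
Definition level (x : nat) : nat := 2 * Phi x + (Phi x < Phi x.+1).

Lemma level_cases x :
  (level x = (2 * Phi x).+1 /\ Phi x < Phi x.+1) \/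
  (level x = 2 * Phi x /\ Phi x.+1 <= Phi x).
Proof.
rewrite /level; case: (ltnP (Phi x) (Phi x.+1)) => ?.
  by left; rewrite addn1.
by right; rewrite addn0.
Qed.

Lemma level_mono : {homo level : x y / x <= y}.
Proof.
move=> x y; rewrite leq_eqVlt => /orP[/eqP->//|xy].
have := Phi_mono (xy : x.+1 <= y).
have := Phi_mono (leqnSn x); have := Phi_mono (leqnSn y).
by case: (level_cases x) => -[-> ?]; case: (level_cases y) => -[-> ?]; lia.
Qed.

Lemma level_stall x y : x < y -> level x = level y -> Phi y.+1 <= Phi x.
Proof.
move=> xy.
have := Phi_mono (xy : x.+1 <= y).
have := Phi_mono (leqnSn x); have := Phi_mono (leqnSn y).
by case: (level_cases x) => -[-> ?]; case: (level_cases y) => -[-> ?]; lia.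
Qed.

Lemma level_lt x : level x < nlevels k m.
Proof.
have := @potential_le n k m w x.
by rewrite /nlevels; case: (level_cases x) => -[-> _]; lia.
Qed.

End Levels.

Lemma card_bigcup_le_sum (I T : finType) (P : {pred I}) (F : I -> {set T}) :
  #|\bigcup_(i in P) F i| <= \sum_(i in P) #|F i|.
Proof.
elim/big_ind2 : _ => // [|m A n B Am Bn]; first by rewrite cards0.
by rewrite (leq_trans (leq_card_setU _ _)) // leq_add.
Qed.

Section Layers.
Variables (n k K' L : nat).
Local Notation K := K'.+1.

Lemma card_ord_set_le (A : {set 'I_n}) x :
  (forall y : 'I_n, y \in A -> y < x) -> #|A| <= x.
Proof.
move=> A_lt; rewrite cardE -(size_map val) -[X in _ <= X](size_iota 0).
apply: uniq_leq_size; first by rewrite map_inj_uniq ?enum_uniq //; apply: val_inj.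
by move=> z /mapP[y]; rewrite mem_enum => yA ->; rewrite mem_iota /= add0n A_lt.
Qed.

Lemma card_ord_set_ge (A : {set 'I_n}) x :
  x <= n -> (forall y : 'I_n, y < x -> y \in A) -> x <= #|A|.
Proof.
move=> xn A_ge; rewrite -[X in X <= _](size_iota 0) cardE -(size_map val).
apply: uniq_leq_size; first exact: iota_uniq.
move=> i; rewrite mem_iota add0n /= => ix.
by apply/mapP; exists (Ordinal (leq_trans ix xn)); rewrite ?mem_enum ?A_ge.
Qed.

Definition layer_letters (w : {ffun 'I_n -> 'I_k}) (lab : nat -> nat) (v : nat) :
  {set 'I_k} := [set w x | x in [set x : 'I_n | lab x == v]].

(* A nondecreasing labelling of the positions by labels below [K] is encoded
   by its cut points [c j], the first position with label at least [j]. *)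
Definition layer_of_cuts (c : {ffun 'I_K -> 'I_n.+1}) (x : 'I_n) : nat :=
  \max_(j : 'I_K | c j <= x) j.

Definition cuts_of (lab : nat -> nat) : {ffun 'I_K -> 'I_n.+1} :=
  [ffun j : 'I_K => inord #|[set y : 'I_n | lab y < j]|].

Definition layer_family (c : {ffun 'I_K -> 'I_n.+1})
    (S : {ffun 'I_K -> {set 'I_k}}) : {set {ffun 'I_n -> 'I_k}} :=
  [set w : {ffun 'I_n -> 'I_k} |
     [forall x, w x \in S (inord (layer_of_cuts c x))]].

Definition layer_codes :
    {set {ffun 'I_K -> 'I_n.+1} * {ffun 'I_K -> {set 'I_k}}} :=
  [set cS : {ffun 'I_K -> 'I_n.+1} * {ffun 'I_K -> {set 'I_k}} |
     [forall j, #|cS.2 j| <= L]].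

Lemma card_layer_family (c : {ffun 'I_K -> 'I_n.+1})
    (S : {ffun 'I_K -> {set 'I_k}}) :
  (forall j, #|S j| <= L) -> #|layer_family c S| <= L ^ n.
Proof.
move=> S_small; have -> : #|layer_family c S| =
    #|family (fun x : 'I_n => mem (S (inord (layer_of_cuts c x))))|.
  by apply: eq_card => w; rewrite inE; apply/forallP/familyP.
rewrite card_family foldrE big_map big_enum /= -[n in L ^ n]card_ord.
by rewrite -prod_nat_const; apply: leq_prod => x _; apply: S_small.
Qed.

Section CutsOf.
Variable lab : nat -> nat.
Hypothesis lab_mono : {homo lab : x y / x <= y}.
Hypothesis lab_lt : forall x : 'I_n, lab x < K.

Lemma cuts_ofE (j : 'I_K) : (cuts_of lab j : nat) = #|[set y : 'I_n | lab y < j]|.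
Proof.
by rewrite ffunE inordK // ltnS -[X in _ <= X]card_ord max_card.
Qed.

Lemma le_cuts_of (j : 'I_K) (x : 'I_n) : (cuts_of lab j <= x) = (j <= lab x).
Proof.
rewrite cuts_ofE; apply/idP/idP => [cut_le|j_le]; last first.
  apply: card_ord_set_le => y; rewrite inE => lab_y; rewrite ltnNge.
  by apply: contraL lab_y => /lab_mono xy; rewrite -leqNgt (leq_trans j_le).
rewrite leqNgt; apply: contraL cut_le => lab_x; rewrite -ltnNge.
apply: card_ord_set_ge => // y; rewrite ltnS inE.
by move=> /lab_mono/leq_ltn_trans; apply.
Qed.

Lemma layer_of_cutsK (x : 'I_n) : layer_of_cuts (cuts_of lab) x = lab x.
Proof.
apply/eqP; rewrite eqn_leq; apply/andP; split.
  by apply/bigmax_leqP => j; rewrite le_cuts_of.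
apply: leq_trans (_ : val (Ordinal (lab_lt x)) <= _) => //.
by apply: (@leq_bigmax_cond _ _ (fun j : 'I_K => val j)); rewrite le_cuts_of.
Qed.

Lemma mem_layer_families (w : {ffun 'I_n -> 'I_k}) :
  (forall v, #|layer_letters w lab v| <= L) ->
  w \in \bigcup_(cS in layer_codes) layer_family cS.1 cS.2.
Proof.
move=> letters_small; apply/bigcupP.
exists (cuts_of lab, [ffun j : 'I_K => layer_letters w lab j]).
  by rewrite inE; apply/forallP => j /=; rewrite ffunE.
rewrite inE; apply/forallP => x /=.
rewrite layer_of_cutsK ffunE inordK //.
by apply/imsetP; exists x; rewrite ?inE.
Qed.

End CutsOf.

Lemma card_layered_words (A : {set {ffun 'I_n -> 'I_k}}) :
  (forall w, w \in A -> exists lab : nat -> nat,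
     [/\ {homo lab : x y / x <= y}, forall x : 'I_n, lab x < K &
         forall v, #|layer_letters w lab v| <= L]) ->
  #|A| <= n.+1 ^ K * #|{ffun 'I_K -> {set 'I_k}}| * L ^ n.
Proof.
move=> A_layered.
apply: leq_trans (_ : #|\bigcup_(cS in layer_codes) layer_family cS.1 cS.2| <= _).
  apply/subset_leq_card/subsetP => w /A_layered[lab [lab_mono lab_lt small]].
  by move: (mem_layer_families lab_mono lab_lt small).
apply: leq_trans (card_bigcup_le_sum _ _) _.
apply: leq_trans (_ : \sum_(cS in layer_codes) L ^ n <= _).
  by apply: leq_sum => cS; rewrite inE => /forallP; apply: card_layer_family.
have -> : n.+1 ^ K = #|{ffun 'I_K -> 'I_n.+1}| by rewrite card_ffun !card_ord.
by rewrite sum_nat_const leq_mul2r -card_prod max_card orbT.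
Qed.

End Layers.

Lemma increasing_in_set k m (W : {set 'I_k}) : m <= #|W| ->
  exists h : 'I_m -> 'I_k,
    (forall a, h a \in W) /\ (forall a c : 'I_m, a < c -> h a < h c).
Proof.
move=> mW; pose s := sort leq [seq val i | i <- enum W].
have size_s : size s = #|W| by rewrite size_sort size_map -cardE.
have s_sorted : sorted ltn s.
  rewrite ltn_sorted_uniq_leq sort_uniq map_inj_uniq ?enum_uniq //=.
    exact: (sort_sorted leq_total).
  exact: val_inj.
have lt_s (a : 'I_m) : a < size s by rewrite size_s (leq_trans (ltn_ord a) mW).
have /fin_all_exists [h Hh] (a : 'I_m) :
    exists l : 'I_k, (l \in W) && (val l == nth 0 s a).
  have : nth 0 s a \in s by apply: mem_nth.
  rewrite mem_sort => /mapP[l]; rewrite mem_enum => lW ->.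
  by exists l; rewrite lW eqxx.
exists h; split => [a|a c ac]; first by case/andP: (Hh a).
have /andP[_ /eqP->] := Hh a; have /andP[_ /eqP->] := Hh c.
by apply: (sorted_ltn_nth ltn_trans 0 s_sorted); rewrite ?inE ?lt_s.
Qed.

(* Positions of one level carrying [m] increasing letters would make the
   potential increase across the level, while it stalls there. *)
Lemma card_level_letters_lt n k m (rho : 'S_m) (w : {ffun 'I_n -> 'I_k}) v :
  1 < m -> ~~ word_contains rho w -> #|layer_letters w (level m w) v| < m.
Proof.
move=> m_gt1 avoid; rewrite ltnNge; apply/negP.
case/increasing_in_set => h [hW h_inc].
have /fin_all_exists [x Hx] (a : 'I_m) :
    exists y : 'I_n, (level m w y == v) && (w y == h a).
  case/imsetP: (hW a) => y; rewrite inE => ly hy.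
  by exists y; rewrite ly hy eqxx.
have wx a : w (x a) = h a by have /andP[_ /eqP] := Hx a.
have lx a : level m w (x a) = v by have /andP[/eqP] := Hx a.
pose o0 : 'I_m := Ordinal (ltnW m_gt1); pose o1 : 'I_m := Ordinal m_gt1.
case: (@arg_minnP _ o0 xpredT (fun a => val (x a)) isT) => a0 _ x_min.
case: (@arg_maxnP _ o0 xpredT (fun a => val (x a)) isT) => a1 _ x_max.
have x_in a : x a0 <= x a < (x a1).+1 by rewrite x_min //= ltnS; apply: x_max.
have x01 : x a0 < x a1.
  rewrite ltn_neqAle x_min // andbT; apply/negP => /eqP x_eq.
  have x_const a : x a = x a0.
    by apply/ord_inj/eqP; rewrite eqn_leq x_min // x_eq andbT; apply: x_max.
  by have := h_inc o0 o1 isT; rewrite -!wx !x_const ltnn.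
have stall := level_stall x01 (etrans (lx a0) (esym (lx a1))).
have := leq_trans (potential_lt (ltnW m_gt1) avoid h_inc wx x_in) stall.
by rewrite ltnn.
Qed.

Definition growth_rate (k m : nat) : nat := minn k m.-1.

Lemma growth_rate_le k m : growth_rate k m <= k.
Proof. exact: geq_minl. Qed.

Lemma growth_rate_gt0 k m : 0 < k -> 1 < m -> 0 < growth_rate k m.
Proof. by move=> k_gt0 m_gt1; rewrite leq_min k_gt0 -ltnS (ltn_predK m_gt1). Qed.

Lemma card_avoiding_words_le n k m (rho : 'S_m) : 1 < m ->
  #|[set w : {ffun 'I_n -> 'I_k} | ~~ word_contains rho w]| <=
    n.+1 ^ nlevels k m * #|{ffun 'I_(nlevels k m) -> {set 'I_k}}| *
    growth_rate k m ^ n.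
Proof.
move=> m_gt1; apply: card_layered_words => w; rewrite inE => avoid.
exists (level m w); split => [||v]; [exact: level_mono | exact: level_lt |].
rewrite leq_min -[X in _ <= X]card_ord max_card /=.
by rewrite -ltnS (ltn_predK m_gt1) (card_level_letters_lt _ m_gt1 avoid).
Qed.

Lemma op_count_le n k m (rho : 'S_m) : 0 < k -> 1 < m ->
  op_count n k rho <=
    n.+1 ^ nlevels k m * #|{ffun 'I_(nlevels k m) -> {set 'I_k}}| *
    growth_rate k m ^ n.
Proof.
move=> k_gt0 m_gt1; apply: leq_trans (@card_avoiding_words_le n k m rho m_gt1).
exact: op_count_le_avoiding_words.
Qed.

(* If every low letter (below [s]) occurs before (resp. after) all larger
   letters, an occurrence of [rho] must start with a low letter, so its first
   value is its smallest (resp. largest) one. *)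
Lemma word_avoids_of_low_letters_first n k m (rho : 'S_m)
    (w : {ffun 'I_n -> 'I_k}) (s : nat) (m_gt1 : 1 < m) :
  k < s + m ->
  (forall x y, w x < s -> w x < w y ->
     if 0 < rho (Ordinal (ltnW m_gt1)) then x < y else y < x) ->
  ~~ word_contains rho w.
Proof.
move=> k_lt low_first; apply/negP => /existsP [b /forallP occ].
have w_inc (a c : 'I_m) : a < c -> w (b a) < w (b c).
  by have /andP[/implyP ? _] := forallP (occ a) c.
have b_rho (a c : 'I_m) : (b a < b c) = (rho a < rho c).
  by have /andP[_ /eqP ?] := forallP (occ a) c.
set o0 := Ordinal (ltnW m_gt1) in low_first; pose o1 : 'I_m := Ordinal m_gt1.
have low0 : w (b o0) < s.
  rewrite ltnNge; apply/negP => s_le.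
  have w_ge i (lt_im : i < m) : s + i <= w (b (Ordinal lt_im)).
    elim: i lt_im => [|i IH] lt_im.
      by rewrite addn0 (_ : Ordinal lt_im = o0) //; apply: val_inj.
    have := IH (ltnW lt_im).
    have := w_inc (Ordinal (ltnW lt_im)) (Ordinal lt_im) (ltnSn i); lia.
  have lt_pred : m.-1 < m by lia.
  by move: (w_ge _ lt_pred) (ltn_ord (w (b (Ordinal lt_pred)))); lia.
have [rho0|rho0] := boolP (0 < rho o0); rewrite ?rho0 ?(negbTE rho0) in low_first.
  have rho_c : rho ((rho^-1)%g o0) = o0 by rewrite permKV.
  have o0_c : o0 < (rho^-1)%g o0.
    rewrite lt0n; apply: contraTneq rho0 => c0.
    have c_eq : (rho^-1)%g o0 = o0 by apply: val_inj.
    by rewrite -{1}c_eq rho_c.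
  by have := low_first _ _ low0 (w_inc _ _ o0_c); rewrite b_rho rho_c ltnNge ltnW.
have rho_o0 : rho o0 = o0.
  by apply: val_inj; move: rho0; rewrite lt0n negbK => /eqP.
by have := low_first _ _ low0 (w_inc o0 o1 isT); rewrite b_rho rho_o0.
Qed.

Section Staircase.
Variables (k' N m : nat) (rho : 'S_m).
Hypothesis m_gt1 : 1 < m.
Local Notation k := k'.+1.
Local Notation n := (k + N.+1).
Local Notation L := (growth_rate k m).
Local Notation s := (k - L).

Definition rank_from (d : bool) (x : 'I_n) : nat :=
  if d then x : nat else n - x.+1.

Definition staircase (d : bool) (g : {ffun 'I_N.+1 -> 'I_L}) :
    {ffun 'I_n -> 'I_k} :=
  [ffun x => if rank_from d x < k then inord (rank_from d x)
             else inord (s + g (inord (rank_from d x - k)))].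

Lemma staircase_low d g x :
  rank_from d x < k -> (staircase d g x : nat) = rank_from d x.
Proof. by move=> lt_k; rewrite ffunE lt_k inordK. Qed.

Lemma staircase_high d g x : k <= rank_from d x ->
  (staircase d g x : nat) = s + g (inord (rank_from d x - k)).
Proof.
move=> le_k; rewrite ffunE ltnNge le_k /= inordK //.
have := ltn_ord (g (inord (rank_from d x - k))).
by have := growth_rate_le k m; lia.
Qed.

Lemma rank_from_surj d i : i < n -> exists x : 'I_n, rank_from d x = i.
Proof.
move=> lt_i; case: d; first by exists (Ordinal lt_i).
have lt_ri : n - i.+1 < n by lia.
by exists (Ordinal lt_ri); rewrite /rank_from /=; lia.
Qed.

Lemma staircase_inj d : injective (staircase d).
Proof.
move=> g1 g2 E; apply/ffunP => z.
have lt_z : k + z < n by have := ltn_ord z; lia.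
have [x rank_x] := rank_from_surj d lt_z.
have : (staircase d g1 x : nat) = staircase d g2 x by rewrite E.
rewrite !staircase_high rank_x ?leq_addr // addKn inord_val => /eqP.
by rewrite eqn_add2l => /eqP/val_inj.
Qed.

Lemma staircase_surj d g i : exists x, staircase d g x = i.
Proof.
have lt_i : (i : nat) < n by have := ltn_ord i; lia.
have [x rank_x] := rank_from_surj d lt_i.
by exists x; apply: val_inj; rewrite /= staircase_low rank_x.
Qed.

Lemma staircase_low_first d g x y : staircase d g x < s ->
  staircase d g x < staircase d g y -> if d then x < y else y < x.
Proof.
move=> low_x lt_xy.
have rank_x : rank_from d x < k.
  rewrite ltnNge; apply/negP => le_k; move: low_x; rewrite staircase_high //; lia.
have : rank_from d x < rank_from d y.
  case: (ltnP (rank_from d y) k) => rank_y; last exact: leq_trans rank_x rank_y.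
  by move: lt_xy; rewrite staircase_low // staircase_low.
rewrite /rank_from; clear low_x lt_xy rank_x.
by case: d; have := ltn_ord x; have := ltn_ord y; lia.
Qed.

Lemma growth_rate_pow_le_op_count : L ^ N.+1 <= op_count n k rho.
Proof.
pose d := 0 < rho (Ordinal (ltnW m_gt1)).
have -> : L ^ N.+1 = #|[set staircase d g | g in [set: {ffun 'I_N.+1 -> 'I_L}]]|.
  by rewrite card_imset ?cardsT ?card_ffun ?card_ord //; apply: staircase_inj.
apply: card_le_op_count => _ /imsetP[g _ ->]; split; first exact: staircase_surj.
apply: (@word_avoids_of_low_letters_first _ _ _ rho (staircase d g) s m_gt1).
  by rewrite /growth_rate; lia.
exact: staircase_low_first.
Qed.

End Staircase.

Lemma op_count_ge n k m (rho : 'S_m) : 0 < k -> 1 < m -> k < n ->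
  growth_rate k m ^ (n - k) <= op_count n k rho.
Proof.
case: k => // k' _ m_gt1 lt_kn.
have [N ->] : exists N, n = k'.+1 + N.+1 by exists (n - k'.+2); lia.
by rewrite addKn; apply: growth_rate_pow_le_op_count.
Qed.

From mathcomp Require Import all_classical all_reals all_analysis ring lra.
Import Order.TTheory GRing.Theory Num.Theory.
Import numFieldNormedType.Exports.
Local Open Scope classical_set_scope.
Local Open Scope ring_scope.

Section RootAsymptotics.
Variable R : realType.

Lemma cvgn_invr_natr : (n%:R^-1 : R) @[n --> \oo] --> 0.
Proof.
apply/gtr0_cvgV0; last exact: cvgr_idn.
by near=> n; rewrite ltr0n; near: n; apply: nbhs_infty_gt.
Unshelve. all: by end_near. Qed.

Lemma ln_succ_le_mul (e : R) : 0 < e ->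
  \forall n \near \oo, ln (n.+1)%:R <= e * n%:R.
Proof.
move=> e_gt0; near=> n.
rewrite -ler_expR lnK ?posrE ?ltr0n //.
apply: le_trans (expR_ge1Dxn 1 (mulr_ge0 (ltW e_gt0) (ler0n _ n))).
have n_large : 2 <= e ^+ 2 * n%:R.
  rewrite -ler_pdivrMl ?exprn_gt0 // mulrC.
  by near: n; apply: nbhs_infty_ger.
rewrite (_ : 2`!%:R = 2 :> R) // -natr1 addrC lerD2l.
have : 0 <= n%:R :> R by []. nra.
Unshelve. all: by end_near. Qed.

Lemma cvgn_ln_succ_div : (ln (n.+1)%:R / n%:R : R) @[n --> \oo] --> 0.
Proof.
apply/cvgrPdist_le => e e_gt0; near=> n.
have n_gt0 : 0 < n%:R :> R by rewrite ltr0n; near: n; apply: nbhs_infty_gt.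
rewrite sub0r normrN ger0_norm ?divr_ge0 ?ln_ge0 ?ler1n //.
by rewrite ler_pdivrMr //; near: n; apply: ln_succ_le_mul.
Unshelve. all: by end_near. Qed.

Section Sandwich.
Variables (a : nat -> nat) (L C K k : nat).
Hypotheses (L_gt0 : (0 < L)%N) (C_gt0 : (0 < C)%N).
Hypothesis a_ge : forall n, (k < n)%N -> (L ^ (n - k) <= a n)%N.
Hypothesis a_le : forall n, (a n <= n.+1 ^ K * C * L ^ n)%N.
Local Notation lnL := (ln (L%:R : R)).

Lemma sandwich_gt0 n : (k < n)%N -> (0 < a n)%N.
Proof.
by move=> lt_kn; apply: leq_trans (a_ge lt_kn); rewrite expn_gt0 L_gt0.
Qed.

Lemma ln_sandwich_ge n : (k < n)%N -> (n%:R - k%:R) * lnL <= ln ((a n)%:R : R).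
Proof.
move=> lt_kn; rewrite -natrB 1?ltnW // mulr_natl -lnXn ?ltr0n //.
rewrite ler_ln ?posrE ?exprn_gt0 ?ltr0n ?sandwich_gt0 //.
by rewrite -natrX ler_nat a_ge.
Qed.

Lemma ln_sandwich_le n : (k < n)%N ->
  ln ((a n)%:R : R) <= K%:R * ln (n.+1)%:R + ln C%:R + n%:R * lnL.
Proof.
move=> lt_kn; rewrite !mulr_natl -!lnXn ?ltr0n //.
rewrite -!lnM ?posrE ?exprn_gt0 ?mulr_gt0 ?ltr0n //.
rewrite ler_ln ?posrE ?mulr_gt0 ?exprn_gt0 ?ltr0n ?sandwich_gt0 //.
by rewrite -!natrX -!natrM ler_nat.
Qed.

Lemma cvgn_ln_root : (n%:R^-1 * ln (a n)%:R : R) @[n --> \oo] --> lnL.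
Proof.
apply: (@squeeze_cvgr _ _ _ _ (fun n => lnL - k%:R * lnL * n%:R^-1)
  (fun n => lnL + (K%:R * (ln (n.+1)%:R / n%:R) + ln C%:R * n%:R^-1))).
- near=> n.
  have lt_kn : (k < n)%N by near: n; apply: nbhs_infty_gt.
  have n_gt0 : 0 < n%:R :> R by rewrite ltr0n (leq_ltn_trans _ lt_kn).
  have n_neq0 : n%:R != 0 :> R by rewrite gt_eqF.
  apply/andP; split; rewrite -(ler_pM2l n_gt0) mulVKf //.
    have -> : n%:R * (lnL - k%:R * lnL * n%:R^-1) = (n%:R - k%:R) * lnL.
      by field.
    exact: ln_sandwich_ge.
  have -> : n%:R * (lnL + (K%:R * (ln (n.+1)%:R / n%:R) + ln C%:R * n%:R^-1)) =
      K%:R * ln (n.+1)%:R + ln C%:R + n%:R * lnL by field.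
  exact: ln_sandwich_le.
- rewrite -[X in _ --> X]subr0; apply: cvgB; first exact: cvg_cst.
  by rewrite -(mulr0 (k%:R * lnL)); apply: cvgMl_tmp; apply: cvgn_invr_natr.
- rewrite -[X in _ --> X]addr0; apply: cvgD; first exact: cvg_cst.
  rewrite -[X in _ --> X]addr0; apply: cvgD.
    by rewrite -(mulr0 K%:R); apply: cvgMl_tmp; apply: cvgn_ln_succ_div.
  by rewrite -(mulr0 (ln C%:R)); apply: cvgMl_tmp; apply: cvgn_invr_natr.
Unshelve. all: by end_near. Qed.

Lemma cvgn_root_of_sandwich :
  ((a n)%:R `^ n%:R^-1 : R) @[n --> \oo] --> (L%:R : R).
Proof.
have <- : expR lnL = L%:R :> R by rewrite lnK // posrE ltr0n.
apply: cvg_trans (continuous_cvg _ _ cvgn_ln_root); last exact: continuous_expR.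
apply: near_eq_cvg; near=> n.
have lt_kn : (k < n)%N by near: n; apply: nbhs_infty_gt.
by rewrite /powR pnatr_eq0 eqn0Ngt sandwich_gt0.
Unshelve. all: by end_near. Qed.

End Sandwich.
End RootAsymptotics.

Theorem theorem11 (R : realType) (k m : nat) (rho : 'S_m) :
  (0 < k)%N -> (2 <= m)%N ->
  exists L : R, 1 <= L /\
    (fun n : nat => ((op_count n k rho)%:R : R) `^ (n%:R^-1)) @ \oo --> L.
Proof.
move=> k_gt0 m_gt1; exists (growth_rate k m)%:R.
split; first by rewrite ler1n growth_rate_gt0.
apply: (@cvgn_root_of_sandwich R _ _
  #|{ffun 'I_(nlevels k m) -> {set 'I_k}}| (nlevels k m) k) => //.
- exact: growth_rate_gt0.
- by apply/card_gt0P; exists [ffun=> finset.set0].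
- by move=> n; apply: op_count_ge.
- by move=> n; apply: op_count_le.
Qed.
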